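(* Let $X$ be a $k$-dimensional complex with vertex set $[n]$ and complete $(k-1)$-skeleton. Fix $d>0$ and let $E=D_{k-1}(X)-dI$. Let $f\ge0$ be such that $\|E\,\delta_{k-2}e_F\|\le f\,\|\delta_{k-2}e_F\|$ for all $F\in X_{k-2}$. Then $\|Eb\|\le k f\|b\|$ for all $b\in B^{k-1}(X)$.
   Context: Standard Euclidean norms. Complexes have linearly ordered vertex sets; $X_i$ is the set of $i$-faces; $[F:G]$ is the oriented incidence number ($(-1)^j$ if $F\setminus G=\{v_j\}$, $F=\{v_0<\dots<v_i\}$; $0$ if $G\not\subseteq F$). Complete $(k-1)$-skeleton: every vertex set of size at most $k$ is a face. $(\delta_{k-2}f)(H)=\sum_{G\in X_{k-2}}[H:G]f(G)$, $B^{k-1}(X)=\operatorname{im}\delta_{k-2}$, $e_F$ is the indicator cochain of $F$. $D_{k-1}(X)$ is the diagonal $X_{k-1}\times X_{k-1}$ matrix whose entry at $F$ is $\deg(F)$, the number of $k$-faces containing $F$. *)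

From HB Require Import structures.
From mathcomp Require Import all_boot all_order all_algebra.
Set Implicit Arguments. Unset Strict Implicit. Unset Printing Implicit Defensive.
Import Order.TTheory GRing.Theory Num.Theory.
Local Open Scope ring_scope.

(* An i-face is a face with i+1 vertices; we index
   face sets by cardinality: [faces X m] = X_{m-1}. *)
Definition is_complex (n : nat) (X : {set {set 'I_n}}) : Prop :=
  forall F G : {set 'I_n}, F \in X -> G \subset F -> G \in X.

Definition is_dim (n k : nat) (X : {set {set 'I_n}}) : Prop :=
  (forall F, F \in X -> (#|F| <= k.+1)%N) /\ (exists2 F, F \in X & #|F| = k.+1).

Definition complete_skeleton (n k : nat) (X : {set {set 'I_n}}) : Prop :=
  forall F : {set 'I_n}, (#|F| <= k)%N -> F \in X.

Definition faces (n : nat) (X : {set {set 'I_n}}) (m : nat) : {set {set 'I_n}} :=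
  [set F in X | #|F| == m].

(* oriented incidence number [F:G]: (-1)^j if F \ G = {v_j} where
   F = {v_0 < ... < v_i} (j = number of vertices of F below v_j);
   0 otherwise. *)
Definition incidence (R : ringType) (n : nat) (F G : {set 'I_n}) : R :=
  if (G \subset F) && (#|F :\: G| == 1%N) then
    match [pick v in F :\: G] with
    | Some v => (-1) ^+ #|[set u in F | (u < v)%N]|
    | None => 0
    end
  else 0.

(* cochains: real-valued functions on vertex sets (only values on the relevant
   faces matter) *)
Definition cochain (R : Type) (n : nat) := {set 'I_n} -> R.

Definition coboundary (R : ringType) (n k : nat) (X : {set {set 'I_n}})
  (f : cochain R n) : cochain R n :=
  fun H => \sum_(G in faces X k.-1) incidence R H G * f G.

Definition in_coboundaries (R : ringType) (n k : nat) (X : {set {set 'I_n}})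
  (b : cochain R n) : Prop :=
  exists g : cochain R n, forall F, F \in faces X k -> b F = coboundary k X g F.

Definition indicator (R : ringType) (n : nat) (F : {set 'I_n}) : cochain R n :=
  fun G => if G == F then 1 else 0.

Definition deg (n k : nat) (X : {set {set 'I_n}}) (F : {set 'I_n}) : nat :=
  #|[set H in faces X k.+1 | F \subset H]|.

Definition Eop (R : ringType) (n k : nat) (X : {set {set 'I_n}}) (d : R)
  (b : cochain R n) : cochain R n :=
  fun F => ((deg k X F)%:R - d) * b F.

Definition norm_k (R : rcfType) (n k : nat) (X : {set {set 'I_n}})
  (b : cochain R n) : R :=
  Num.sqrt (\sum_(F in faces X k) b F ^+ 2).

From HB Require Import structures.
From mathcomp Require Import all_boot all_order all_algebra.
From mathcomp Require Import ring lra.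
Set Implicit Arguments. Unset Strict Implicit. Unset Printing Implicit Defensive.
Import Order.TTheory GRing.Theory Num.Theory.
Local Open Scope ring_scope.

(* Let b be a (k-1)-coboundary, hence a cocycle, and F a (k-1)-face.  For a
   vertex v outside F the cocycle condition on F + v expresses b(F) as a signed
   sum of the k values of b on the other facets of F + v, all containing v; by
   Cauchy-Schwarz b(F)^2 <= k * sum of their squares (trivially so if v is in F).
   Summing over the n vertices gives n b(F)^2 <= k * sum_{G facet of F} m(G),
   where m(G) is the squared mass of b on the (k-1)-faces containing G.
   Multiplying by E(F)^2 and exchanging sums, the local hypothesis bounds the
   weight sum_{H > G} E(H)^2 = |E delta e_G|^2 by f^2 |delta e_G|^2 <= f^2 n,
   while sum_G m(G) = k |b|^2.  Hence n |E b|^2 <= k^2 f^2 n |b|^2. *)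

Section SetsOfCard.
Variable T : finType.
Implicit Types (A G H : {set T}).

Definition sets_of_card (m : nat) : {set {set T}} := [set A : {set T} | #|A| == m].

Lemma sets_of_cardE m A : (A \in sets_of_card m) = (#|A| == m).
Proof. by rewrite inE. Qed.

Lemma subset_card_succ G H : G \subset H -> #|H| = #|G|.+1 ->
  exists2 w, w \notin G & H = w |: G.
Proof.
move=> sGH cH.
have /cards1P[w HGw] : #|H :\: G| == 1%N by rewrite cardsDS // cH subSnn.
have wG : w \notin G by have := set11 w; rewrite -HGw inE => /andP[].
by exists w; rewrite // -(setID H G) (setIidPr sGH) HGw setUC.
Qed.

Lemma sum_facets (V : nmodType) m (A : {set T}) (phi : {set T} -> V) : #|A| = m.+1 ->
  \sum_(x in A) phi (A :\ x) = \sum_(G in sets_of_card m | G \subset A) phi G.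
Proof.
move=> cA; rewrite -big_imset /=; last first.
  move=> x y xA _ eAxy; apply/eqP; apply: contraT => nxy.
  by have := setD11 x A; rewrite eAxy !inE nxy xA.
apply: eq_bigl => G; apply/imsetP/andP => [[x xA ->]|[]].
  by rewrite sets_of_cardE subsetDl; move: cA; rewrite (cardsD1 x) xA add1n => -[->].
rewrite sets_of_cardE => /eqP cG sGA; rewrite -cG in cA.
have [w wG ->] := subset_card_succ sGA cA.
by exists w; rewrite ?setU11 ?setU1K.
Qed.

Lemma sum_cofacets (V : nmodType) m (G : {set T}) (phi : {set T} -> V) : #|G| = m ->
  \sum_(w in ~: G) phi (w |: G) = \sum_(H in sets_of_card m.+1 | G \subset H) phi H.
Proof.
move=> cG; rewrite -big_imset /=; last first.
  move=> x y; rewrite !inE => xG _ eGxy.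
  by have := setU11 x G; rewrite eGxy in_setU1 (negbTE xG) orbF => /eqP.
apply: eq_bigl => H; apply/imsetP/andP => [[w]|[]].
  by rewrite inE => wG ->; rewrite sets_of_cardE cardsU1 wG cG subsetUr.
rewrite sets_of_cardE => /eqP cH sGH; rewrite -cG in cH.
have [w wG ->] := subset_card_succ sGH cH.
by exists w; rewrite ?inE.
Qed.

End SetsOfCard.

Lemma sqr_sum_le_card_sum_sqr (R : realDomainType) (I : finType) (A : {pred I})
    (x : I -> R) :
  (\sum_(i in A) x i) ^+ 2 <= #|A|%:R * \sum_(i in A) x i ^+ 2.
Proof.
set S := \sum_(i in A) x i; set Q := \sum_(i in A) x i ^+ 2.
have row_sum i : \sum_(j in A) (x i - x j) ^+ 2 = x i ^+ 2 *+ #|A| + Q - (x i * S) *+ 2.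
  rewrite (eq_bigr (fun j => (x i ^+ 2 + x j ^+ 2) - (x i * x j) *+ 2)); last first.
    by move=> j _; rewrite sqrrB; ring.
  by rewrite sumrB big_split /= sumr_const sumrMnl -mulr_sumr.
have : 0 <= \sum_(i in A) \sum_(j in A) (x i - x j) ^+ 2.
  by do 2![apply: sumr_ge0 => ? _]; apply: sqr_ge0.
rewrite (eq_bigr _ (fun i _ => row_sum i)) sumrB big_split /= !sumrMnl sumr_const.
rewrite -mulr_suml -/S -/Q -[Q *+ _]mulr_natr mulr2n.
move: (#|A|%:R : R) => c; nra.
Qed.

Section FacetSign.
Variables (R : comNzRingType) (n : nat).
Implicit Types (A G K : {set 'I_n}).

Definition facet_sign A (x : 'I_n) : R := (-1) ^+ #|[set u in A | (u < x)%N]|.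

Lemma facet_sign_setD1_lt K (x y : 'I_n) :
  (y < x)%N -> facet_sign (K :\ x) y = facet_sign K y.
Proof.
move=> ltyx; rewrite /facet_sign.
have -> // : [set u in K :\ x | (u < y)%N] = [set u in K | (u < y)%N].
by apply/setP => u; rewrite !inE; case: (u =P x) => // ->; rewrite ltnNge (ltnW ltyx) /= andbF.
Qed.

Lemma facet_sign_setD1_gt K (x y : 'I_n) :
  y \in K -> (y < x)%N -> facet_sign K x = - facet_sign (K :\ y) x.
Proof.
move=> yK ltyx; rewrite /facet_sign.
have -> : [set u in K | (u < x)%N] = y |: [set u in K :\ y | (u < x)%N].
  by apply/setP => u; rewrite !inE; case: (u =P y) => // ->; rewrite yK ltyx.
by rewrite cardsU1 !inE eqxx /= exprS mulN1r.
Qed.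

(* The sign rule behind [delta \o delta = 0]. *)
Lemma facet_sign_swap K (x y : 'I_n) : x != y ->
  x \in K -> y \in K ->
  facet_sign K x * facet_sign (K :\ x) y = - (facet_sign K y * facet_sign (K :\ y) x).
Proof.
move=> nxy xK yK; case: (ltngtP x y) => [ltxy|ltyx|/val_inj exy].
- by rewrite (facet_sign_setD1_lt K ltxy) (facet_sign_setD1_gt xK ltxy) mulNr opprK mulrC.
- by rewrite (facet_sign_setD1_lt K ltyx) (facet_sign_setD1_gt yK ltyx) mulNr mulrC.
- by rewrite exy eqxx in nxy.
Qed.

Lemma incidence_setD1 A x : x \in A -> incidence R A (A :\ x) = facet_sign A x.
Proof.
move=> xA; have AAx : A :\: (A :\ x) = [set x].
  by apply/setP => y; rewrite !inE; case: (y =P x) => [->|_] /=; rewrite ?xA ?andNb.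
rewrite /incidence subsetDl AAx cards1 /=.
by case: pickP => [v|/(_ x)]; rewrite !inE ?eqxx // => /eqP ->.
Qed.

Lemma incidence_sqr A G : G \subset A -> #|A| = #|G|.+1 -> incidence R A G ^+ 2 = 1.
Proof.
move=> sGA cA; have [w wG ->] := subset_card_succ sGA cA.
by rewrite -{2}(setU1K wG) incidence_setD1 ?setU11 // sqrr_sign.
Qed.

Lemma incidence_notsub A G : ~~ (G \subset A) -> incidence R A G = 0.
Proof. by rewrite /incidence => /negbTE ->. Qed.

End FacetSign.

Lemma sum_antisym_eq0 (R : numDomainType) (I : finType) (A : {pred I}) (a : I -> I -> R) :
  {in A &, forall x y, x != y -> a x y = - a y x} ->
  \sum_(x in A) \sum_(y in A | y != x) a x y = 0.
Proof.
move=> anti; set S := \sum_(x in A) _.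
have SN : S = - S.
  rewrite {1}/S (exchange_big_dep (mem A)) /=; last by move=> x y _ /andP[].
  rewrite -sumrN; apply: eq_bigr => y yA; rewrite -sumrN.
  apply: eq_big => [x|x /andP[xA /andP[_ nyx]]]; first by rewrite yA eq_sym.
  by rewrite anti // eq_sym.
by apply/eqP; rewrite -[S == 0](mulrn_eq0 _ 2) mulr2n {2}SN subrr.
Qed.

Definition is_cocycle (R : comNzRingType) (n k : nat) (b : cochain R n) : Prop :=
  forall K : {set 'I_n}, #|K| = k.+1 ->
    \sum_(x in K) facet_sign R K x * b (K :\ x) = 0.

Section CompleteSkeleton.
Variables (R : numDomainType) (n k : nat) (X : {set {set 'I_n}}).
Hypotheses (hk : (0 < k)%N) (hskel : complete_skeleton k X).

Lemma faces_complete m : (m <= k)%N -> faces X m = sets_of_card _ m.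
Proof.
move=> lemk; apply/setP => A; rewrite sets_of_cardE inE.
by case: eqP => [cA|]; rewrite ?andbT ?andbF // hskel ?cA.
Qed.

Lemma coboundaryE (g : cochain R n) (H : {set 'I_n}) : #|H| = k ->
  coboundary k X g H = \sum_(x in H) facet_sign R H x * g (H :\ x).
Proof.
move=> cH; rewrite /coboundary faces_complete ?leq_pred //.
under [RHS]eq_bigr => x xH do rewrite -(incidence_setD1 R xH).
rewrite (sum_facets (m := k.-1) (fun G => incidence R H G * g G)) ?prednK //.
rewrite (bigID (fun G : {set 'I_n} => G \subset H)) /= [X in _ + X]big1 ?addr0 //.
by move=> G /andP[_ nsGH]; rewrite incidence_notsub ?mul0r.
Qed.

Lemma coboundary_cocycle (g : cochain R n) : is_cocycle k (coboundary k X g).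
Proof.
move=> K cK; pose a x y := facet_sign R K x * facet_sign R (K :\ x) y * g (K :\ x :\ y).
rewrite -[RHS](@sum_antisym_eq0 _ _ K a); last first.
  move=> x y xK yK nxy; rewrite /a facet_sign_swap // mulNr.
  by congr (- (_ * g _)); apply/setP => u; rewrite !inE andbCA.
apply: eq_bigr => x xK; rewrite coboundaryE; last first.
  by move: cK; rewrite (cardsD1 x) xK add1n => -[].
rewrite mulr_sumr; apply: eq_big => [y|y _]; first by rewrite !inE andbC.
by rewrite /a mulrA.
Qed.

Lemma in_coboundaries_cocycle (b : cochain R n) :
  in_coboundaries k X b -> is_cocycle k b.
Proof.
move=> [g bg] K cK; rewrite -[RHS](coboundary_cocycle g cK).
apply: eq_bigr => x xK; rewrite bg // faces_complete // sets_of_cardE.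
by move: cK; rewrite (cardsD1 x) xK add1n => -[->].
Qed.

Lemma sum_sqr_mul_coboundary_indicator (e : cochain R n) (G : {set 'I_n}) :
  #|G| = k.-1 ->
  \sum_(H in sets_of_card _ k) (e H * coboundary k X (indicator R G) H) ^+ 2
    = \sum_(H in sets_of_card _ k | G \subset H) e H ^+ 2.
Proof.
move=> cG; have GX : G \in faces X k.-1.
  by rewrite faces_complete ?leq_pred ?sets_of_cardE ?cG.
rewrite big_mkcondr; apply: eq_bigr => H; rewrite sets_of_cardE => /eqP cH.
rewrite /coboundary (bigD1 G) //= big1 ?addr0 => [|G' /andP[_ nG'G]]; last first.
  by rewrite /indicator (negbTE nG'G) mulr0.
rewrite /indicator eqxx mulr1 exprMn.
have [sGH|nsGH] := boolP (G \subset H); last by rewrite incidence_notsub // expr0n mulr0.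
by rewrite incidence_sqr ?mulr1 // cH cG prednK.
Qed.

Lemma sum_sqr_coboundary_indicator (G : {set 'I_n}) : #|G| = k.-1 ->
  \sum_(H in sets_of_card _ k) coboundary k X (indicator R G) H ^+ 2 = (n - k.-1)%:R.
Proof.
move=> cG; transitivity
  (\sum_(H in sets_of_card _ k) ((fun=> 1) H * coboundary k X (indicator R G) H) ^+ 2).
  by apply: eq_bigr => H _; rewrite mul1r.
rewrite sum_sqr_mul_coboundary_indicator // -(prednK hk) -(sum_cofacets _ cG) /=.
by rewrite sumr_const expr1n -[n in (n - _)%N]card_ord -(cardsC G) cG addKn.
Qed.

End CompleteSkeleton.

Section CocycleEstimate.
Variables (R : realFieldType) (n k : nat) (b : cochain R n).
Hypotheses (hk : (0 < k)%N) (hb : is_cocycle k b).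

Lemma cocycle_sqr_le (F : {set 'I_n}) (v : 'I_n) : #|F| = k ->
  b F ^+ 2 <= k%:R *
    \sum_(G in sets_of_card _ k.-1 | G \subset F) (v \notin G)%:R * b (v |: G) ^+ 2.
Proof.
move=> cF; rewrite -(sum_facets (fun G => (v \notin G)%:R * b (v |: G) ^+ 2)) ?prednK //.
have [vF|vF] := boolP (v \in F).
  rewrite (bigD1 v) //= setD11 setD1K //= mul1r.
  set rest := \sum_(_ | _) _.
  have rest_ge0 : 0 <= rest by apply: sumr_ge0 => x _; rewrite mulr_ge0 ?ler0n ?sqr_ge0.
  apply: (@le_trans _ _ (b F ^+ 2 + rest)); first by rewrite lerDl.
  by rewrite ler_peMl ?addr_ge0 ?sqr_ge0 // ler1n.
set K := v |: F.
have cK : #|K| = k.+1 by rewrite cardsU1 vF cF.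
have := hb cK; rewrite (bigD1 v) ?setU11 //= setU1K //.
rewrite (eq_bigl (fun x => x \in F)) => [/eqP|x]; last first.
  by rewrite !inE; case: (x =P v) => [->|_] /=; rewrite ?(negbTE vF) ?andbT.
(* Since [b] is a cocycle, [b F] is a signed sum of [b] over the other facets of [K]. *)
rewrite addr_eq0 => /eqP sbF.
have -> : b F ^+ 2 = (\sum_(x in F) facet_sign R K x * b (K :\ x)) ^+ 2.
  by rewrite -[in RHS]sqrrN -sbF exprMn sqrr_sign mul1r.
apply: le_trans (sqr_sum_le_card_sum_sqr _ _) _.
rewrite cF ler_wpM2l ?ler0n //; apply: ler_sum => x xF.
have xv : x != v by apply: contraNneq vF => <-.
have -> : K :\ x = v |: (F :\ x).
  by apply/setP => u; rewrite !inE; case: (u =P v) => [->|] //=; rewrite andbT eq_sym.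
by rewrite exprMn sqrr_sign mul1r !inE negb_and vF orbT mul1r.
Qed.

Let star_mass (G : {set 'I_n}) : R :=
  \sum_(H in sets_of_card _ k | G \subset H) b H ^+ 2.

Lemma sum_cofacet_sqr (G : {set 'I_n}) : #|G| = k.-1 ->
  \sum_v (v \notin G)%:R * b (v |: G) ^+ 2 = star_mass G.
Proof.
move=> cG; rewrite /star_mass -(prednK hk) -(sum_cofacets _ cG).
rewrite (bigID (fun v => v \in G)) /= big1 ?add0r => [|v vG]; last by rewrite vG mul0r.
by apply: eq_big => [v|v vG]; rewrite ?inE // vG mul1r.
Qed.

Lemma cocycle_sqr_le_star (F : {set 'I_n}) : #|F| = k ->
  n%:R * b F ^+ 2 <= k%:R * \sum_(G in sets_of_card _ k.-1 | G \subset F) star_mass G.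
Proof.
move=> cF; rewrite -[n in n%:R]card_ord mulr_natl -sumr_const.
apply: le_trans (ler_sum _ (fun v _ => cocycle_sqr_le v cF)) _.
rewrite -mulr_sumr exchange_big /= ler_wpM2l ?ler0n //.
by apply: ler_sum => G /andP[]; rewrite sets_of_cardE => /eqP cG _; rewrite sum_cofacet_sqr.
Qed.

Lemma sum_star_mass :
  \sum_(G in sets_of_card _ k.-1) star_mass G = k%:R * \sum_(H in sets_of_card _ k) b H ^+ 2.
Proof.
rewrite /star_mass (exchange_big_dep (mem (sets_of_card _ k))) /=; last by move=> ? ? _ /andP[].
rewrite mulr_sumr; apply: eq_bigr => H HS.
rewrite (eq_bigl (fun G => (G \in sets_of_card _ k.-1) && (G \subset H))) => [|G]; last first.
  by rewrite HS.
move: HS; rewrite sets_of_cardE => /eqP cH.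
by rewrite -(sum_facets (fun=> b H ^+ 2)) ?prednK // sumr_const cH mulr_natl.
Qed.

Lemma cocycle_weighted_sqr_le (e : cochain R n) (c : R) :
  (forall G : {set 'I_n}, #|G| = k.-1 ->
     \sum_(H in sets_of_card _ k | G \subset H) e H ^+ 2 <= c * n%:R) ->
  \sum_(F in sets_of_card _ k) (e F * b F) ^+ 2
    <= k%:R ^+ 2 * c * \sum_(F in sets_of_card _ k) b F ^+ 2.
Proof.
move=> he; have [n0|n_gt0] := posnP n.
  suff -> : sets_of_card 'I_n k = set0 by rewrite !big_set0 mulr0.
  apply/setP => F; rewrite sets_of_cardE inE; apply: contraTF hk => /eqP <-.
  by rewrite -leqNgt -n0 -[n in (_ <= n)%N]card_ord max_card.
have star_mass_ge0 G : 0 <= star_mass G by apply: sumr_ge0 => H _; apply: sqr_ge0.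
rewrite -(@ler_pM2l _ n%:R) ?ltr0n // [leLHS]mulr_sumr.
apply: (@le_trans _ _ (\sum_(F in sets_of_card _ k)
   e F ^+ 2 * (k%:R * \sum_(G in sets_of_card _ k.-1 | G \subset F) star_mass G))).
  apply: ler_sum => F; rewrite sets_of_cardE => /eqP cF.
  by rewrite exprMn mulrCA ler_wpM2l ?sqr_ge0 ?cocycle_sqr_le_star.
under eq_bigr do rewrite mulrCA mulr_sumr.
rewrite -mulr_sumr (exchange_big_dep (mem (sets_of_card _ k.-1))) /=; last first.
  by move=> ? ? _ /andP[].
apply: (@le_trans _ _ (k%:R * \sum_(G in sets_of_card _ k.-1) (c * n%:R) * star_mass G)).
  rewrite ler_wpM2l ?ler0n //; apply: ler_sum => G GS; rewrite -mulr_suml ler_wpM2r //.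
  rewrite (eq_bigl (fun H => (H \in sets_of_card _ k) && (G \subset H))) => [|H]; last first.
    by rewrite GS.
  by apply: he; move: GS; rewrite sets_of_cardE => /eqP.
rewrite -mulr_sumr sum_star_mass; lra.
Qed.

End CocycleEstimate.

Lemma sqrt_le_mul_sqrt (R : rcfType) (a c f : R) : 0 <= f -> 0 <= c ->
  (Num.sqrt a <= f * Num.sqrt c) = (a <= f ^+ 2 * c).
Proof.
move=> f_ge0 c_ge0; rewrite -[f in f * _](ger0_norm f_ge0) -sqrtr_sqr -sqrtrM ?sqr_ge0 //.
by rewrite ler_sqrt // mulr_ge0 ?sqr_ge0.
Qed.

Section LocalBound.
Variables (R : rcfType) (n k : nat) (X : {set {set 'I_n}}).
Hypotheses (hk : (0 < k)%N) (hskel : complete_skeleton k X).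

Lemma local_weight_le (d f : R) (G : {set 'I_n}) : 0 <= f -> #|G| = k.-1 ->
  norm_k k X (Eop k X d (coboundary k X (indicator R G)))
    <= f * norm_k k X (coboundary k X (indicator R G)) ->
  \sum_(H in sets_of_card _ k | G \subset H) ((deg k X H)%:R - d) ^+ 2 <= f ^+ 2 * n%:R.
Proof.
move=> f_ge0 cG; rewrite /norm_k /Eop (faces_complete hskel) // sqrt_le_mul_sqrt //; last first.
  by apply: sumr_ge0 => H _; apply: sqr_ge0.
rewrite sum_sqr_mul_coboundary_indicator // sum_sqr_coboundary_indicator //.
by move=> /le_trans; apply; rewrite ler_wpM2l ?sqr_ge0 // ler_nat leq_subr.
Qed.

End LocalBound.

Theorem proposition3p6 (R : rcfType) (n k : nat) (X : {set {set 'I_n}})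
  (hk : (0 < k)%N)
  (hX : is_complex X) (hdim : is_dim k X) (hskel : complete_skeleton k X)
  (d : R) (hd : 0 < d) (f : R) (hf : 0 <= f)
  (hloc : forall F, F \in faces X k.-1 ->
     norm_k k X (Eop k X d (coboundary k X (indicator R F)))
       <= f * norm_k k X (coboundary k X (indicator R F))) :
  forall b : cochain R n, in_coboundaries k X b ->
    norm_k k X (Eop k X d b) <= k%:R * f * norm_k k X b.
Proof.
move=> b /(in_coboundaries_cocycle hk hskel) b_cocycle.
rewrite /norm_k /Eop (faces_complete hskel) // sqrt_le_mul_sqrt ?mulr_ge0 //; last first.
  by apply: sumr_ge0 => H _; apply: sqr_ge0.
rewrite exprMn; apply: cocycle_weighted_sqr_le => // G cG.
apply: local_weight_le => //; apply: hloc.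
by rewrite (faces_complete hskel) ?leq_pred // sets_of_cardE cG.
Qed.
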